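(* If a monoid $M$ is the limit of an inductive system of sofic monoids, then $M$ is sofic.
   Context: An inductive system of monoids $(M_i,\psi_{ji})$ consists of a directed set $I$, monoids $M_i$ ($i\in I$), and monoid morphisms $\psi_{ji}\colon M_i\to M_j$ for $i\le j$ with $\psi_{ii}=\mathrm{Id}_{M_i}$ and $\psi_{kj}\circ\psi_{ji}=\psi_{ki}$ for $i\le j\le k$. Its limit is the quotient of the disjoint union $\coprod_i M_i$ by the relation $x_i\sim x_j$ ($x_i\in M_i$, $x_j\in M_j$) iff there is $\ell\ge i,j$ with $\psi_{\ell i}(x_i)=\psi_{\ell j}(x_j)$, with multiplication $[x_i][y_j]=[\psi_{\ell i}(x_i)\psi_{\ell j}(y_j)]$ for any $\ell\ge i,j$. For a non-empty finite set $X$, $\mathrm{Map}(X)$ is the monoid of all maps $X\to X$ under composition (identity $\mathrm{Id}_X$) with the Hamming metric $d_X(f,g)=|\{x\in X : f(x)\ne g(x)\}|/|X|$. For a monoid $M$, finite $K\subset M$ and $\varepsilon,\alpha>0$, a map $\varphi\colon M\to\mathrm{Map}(X)$ is a $(K,\varepsilon)$-morphism if $d_X(\varphi(k_1k_2),\varphi(k_1)\varphi(k_2))\le\varepsilon$ for all $k_1,k_2\in K$ and $d_X(\varphi(1_M),\mathrm{Id}_X)\le\varepsilon$; it is $(K,\alpha)$-injective if $d_X(\varphi(k_1),\varphi(k_2))\ge\alpha$ for all distinct $k_1,k_2\in K$. $M$ is sofic if for every finite $K\subset M$ and every $\varepsilon>0$ there exist a non-empty finite set $X$ and a $(K,1-\varepsilon)$-injective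 $(K,\varepsilon)$-morphism $\varphi\colon M\to\mathrm{Map}(X)$. *)

From Stdlib Require Import Reals.
From HB Require Import structures.
From mathcomp Require Import all_boot.

Set Implicit Arguments.
Unset Strict Implicit.
Unset Printing Implicit Defensive.

Local Open Scope group_scope.

Definition directed_set (I : Type) (le : I -> I -> Prop) : Prop :=
  inhabited I /\
  (forall i, le i i) /\
  (forall i j k, le i j -> le j k -> le i k) /\
  (forall i j, exists k, le i k /\ le j k).

(* (M_i, psi_ji) is an inductive system over (I, le).  The connecting map
   psi_ji is [psi i j : M i -> M j]; it is only constrained for i <= j. *)
Definition inductive_system (I : Type) (le : I -> I -> Prop)
    (M : I -> monoidType) (psi : forall i j : I, M i -> M j) : Prop :=
  directed_set le /\
  (forall i j, le i j -> monoid_morphism (psi i j)) /\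
  (forall i (x : M i), psi i i x = x) /\
  (forall i j k, le i j -> le j k -> forall x : M i,
      psi j k (psi i j x) = psi i k x).

Definition lim_rel (I : Type) (le : I -> I -> Prop)
    (M : I -> monoidType) (psi : forall i j : I, M i -> M j)
    (a b : {i : I & M i}) : Prop :=
  exists l, le (projT1 a) l /\ le (projT1 b) l /\
            psi (projT1 a) l (projT2 a) = psi (projT1 b) l (projT2 b).

(* [L] is (isomorphic to) the limit of the system: there is a surjection [q]
   from the disjoint union onto [L] whose fibres are exactly the classes of
   [lim_rel], such that [q] transports the limit multiplication
   [x_i][y_j] = [psi_li x_i * psi_lj y_j] (any l >= i, j) and unit [1_{M_i}]
   to those of [L]. *)
Definition is_limit (I : Type) (le : I -> I -> Prop)
    (M : I -> monoidType) (psi : forall i j : I, M i -> M j)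
    (L : monoidType) : Prop :=
  exists q : {i : I & M i} -> L,
    (forall y : L, exists a, q a = y) /\
    (forall a b, q a = q b <-> lim_rel le psi a b) /\
    (forall i (x : M i) j (y : M j) l, le i l -> le j l ->
        q (existT _ i x) * q (existT _ j y)
        = q (existT _ l (psi i l x * psi j l y))) /\
    (forall i, q (existT (fun k => M k) i (1%g : M i)) = 1%g).

Definition hamming (X : finType) (f g : X -> X) : R :=
  Rdiv (INR #|[set x | f x != g x]|) (INR #|X|).

Definition is_KE_morphism (M : monoidType) (K : seq M) (eps : R)
    (X : finType) (phi : M -> (X -> X)) : Prop :=
  (forall k1 k2, k1 \in K -> k2 \in K ->
      Rle (hamming (phi (k1 * k2)) (fun x => phi k1 (phi k2 x))) eps) /\
  Rle (hamming (phi 1%g) id) eps.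

Definition is_Kalpha_injective (M : monoidType) (K : seq M) (alpha : R)
    (X : finType) (phi : M -> (X -> X)) : Prop :=
  forall k1 k2, k1 \in K -> k2 \in K -> k1 != k2 ->
    Rle alpha (hamming (phi k1) (phi k2)).

(* Finite subsets K of M are represented by finite sequences. *)
Definition sofic (M : monoidType) : Prop :=
  forall (K : seq M) (eps : R), Rlt 0 eps ->
    exists (X : finType) (phi : M -> (X -> X)),
      (0 < #|X|)%N /\
      is_Kalpha_injective K (Rminus 1 eps) phi /\
      is_KE_morphism K eps phi.

From Stdlib Require Import ClassicalEpsilon.
From HB Require Import structures.
From mathcomp Require Import all_boot.

Set Implicit Arguments.
Unset Strict Implicit.
Unset Printing Implicit Defensive.
Local Open Scope group_scope.

(** A monoid is sofic as soon as every finite subset of it maps injectively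
    and multiplicatively (on products of two of its elements) into some sofic
    monoid: pull back the sofic approximations of the target.  A finite subset
    K of the limit, together with its pairwise products and 1, lifts to a
    common level l; each identity among these lifts that holds in the limit
    already holds at a single higher level, and finitely many of them hold at
    a common level l'.  Mapping K to level l' through l then gives the local
    embedding. *)

Lemma sofic_of_local_embeddings (M : monoidType) :
  (forall K : seq M, exists (N : monoidType) (s : M -> N),
     [/\ sofic N, {in K &, injective s},
         {in K &, forall k1 k2, s (k1 * k2) = s k1 * s k2} & s 1 = 1]) ->
  sofic M.
Proof.
move=> loc K eps eps_gt0.
have [N [s [sofN s_inj sM s1]]] := loc K.
have [X [phi [X_gt0 [phi_inj [phiM phi1]]]]] := sofN (map s K) eps eps_gt0.
exists X, (fun m => phi (s m)); split => //; split.
  move=> k1 k2 K1 K2 k12; apply: phi_inj; rewrite ?map_f //.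
  by apply: contra k12 => /eqP/s_inj-> //.
split; last by rewrite s1.
by move=> k1 k2 K1 K2; rewrite sM //; apply: phiM; rewrite map_f.
Qed.

Lemma directed_eventually_all (I : Type) (le : I -> I -> Prop)
    (J : eqType) (P : J -> I -> Prop) (i : I) (js : seq J) :
  directed_set le ->
  {in js, forall j, exists u, P j u} ->
  {in js, forall j u v, P j u -> le u v -> P j v} ->
  exists u, le i u /\ {in js, forall j, P j u}.
Proof.
move=> [_ [le_refl [le_trans le_dir]]].
elim: js => [|j js IHjs] P_ev P_up; first by exists i.
have [u [iu Pu]] : exists u, le i u /\ {in js, forall k, P k u}.
  by apply: IHjs => k Kk; [apply: P_ev | apply: P_up]; rewrite inE Kk orbT.
have [v Pjv] := P_ev j (mem_head j js); have [w [uw vw]] := le_dir u v.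
exists w; split; first exact: le_trans iu uw.
move=> k; rewrite inE => /predU1P [->|Kk]; first exact: P_up (mem_head j js) _ _ Pjv vw.
by apply: P_up (Pu k Kk) uw; rewrite inE Kk orbT.
Qed.

Section LimitLocalEmbedding.

Variables (I : Type) (le : I -> I -> Prop) (Mi : I -> monoidType).
Variables (psi : forall i j : I, Mi i -> Mi j) (M : monoidType).
Variable q : {i : I & Mi i} -> M.
Arguments psi : clear implicits.

Hypothesis le_directed : directed_set le.
Hypothesis psi_morph : forall i j, le i j -> monoid_morphism (psi i j).
Hypothesis psi_id : forall i (x : Mi i), psi i i x = x.
Hypothesis psi_comp : forall i j k, le i j -> le j k -> forall x : Mi i,
  psi j k (psi i j x) = psi i k x.
Hypothesis q_surj : forall m : M, exists a, q a = m.
Hypothesis q_eq : forall a b, q a = q b <-> lim_rel le psi a b.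
Hypothesis q_mul : forall i (x : Mi i) j (y : Mi j) l, le i l -> le j l ->
  q (existT _ i x) * q (existT _ j y) = q (existT _ l (psi i l x * psi j l y)).
Hypothesis q_one : forall i, q (existT (fun k => Mi k) i 1) = 1.

Local Notation Q i x := (q (existT (fun k => Mi k) i x)).

Let le_refl i : le i i. Proof. by have [_ []] := le_directed. Qed.
Let le_trans i j k : le i j -> le j k -> le i k.
Proof. by have [_ [_ [le_tr _]]] := le_directed; apply: le_tr. Qed.

Lemma Q_psi i j (x : Mi i) : le i j -> Q j (psi i j x) = Q i x.
Proof. by move=> ij; apply/q_eq; exists j; rewrite /= psi_id. Qed.

Lemma Q_mul i (x y : Mi i) : Q i (x * y) = Q i x * Q i y.
Proof. by rewrite (q_mul x y (le_refl i) (le_refl i)) !psi_id. Qed.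

Lemma lift_to_level (K : seq M) :
  exists l (y : M -> Mi l), {in K, forall m, Q l (y m) = m}.
Proof.
have [[i0] _] := le_directed.
have [l [_ liftK]] : exists l, le i0 l /\ {in K, forall m, exists x : Mi l, Q l x = m}.
  apply: directed_eventually_all => // [m _|m _ u v [x <-] uv].
    by have [[i x] <-] := q_surj m; exists i, x.
  by exists (psi u v x); apply: Q_psi.
exists l, (fun m => epsilon (inhabits 1) (fun x : Mi l => Q l x = m)).
by move=> m /liftK Km; apply: (epsilon_spec _ (fun x : Mi l => Q l x = m)).
Qed.

Lemma equalize_at_level l (P : seq (Mi l * Mi l)) :
  {in P, forall p, Q l p.1 = Q l p.2} ->
  exists l', le l l' /\ {in P, forall p, psi l l' p.1 = psi l l' p.2}.
Proof.
move=> QP; have [l' [ll' eqP']] : exists l', le l l' /\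
    {in P, forall p, le l l' /\ psi l l' p.1 = psi l l' p.2}.
  apply: directed_eventually_all => // [p /QP/q_eq [u [lu [_ eq_u]]]|].
    by exists u.
  move=> p _ u v [lu eq_u] uv; split; first exact: le_trans lu uv.
  by rewrite -!(psi_comp lu uv) eq_u.
by exists l'; split=> // p /eqP'[].
Qed.

Lemma limit_local_embedding (K : seq M) :
  exists l (s : M -> Mi l), [/\ {in K &, injective s},
    {in K &, forall k1 k2, s (k1 * k2) = s k1 * s k2} & s 1 = 1].
Proof.
have [l [y Qy]] := lift_to_level (K ++ [seq a * b | a <- K, b <- K] ++ [:: 1]).
have Qy_K k : k \in K -> Q l (y k) = k by move=> Kk; rewrite Qy // mem_cat Kk.
have Qy_KK k1 k2 : k1 \in K -> k2 \in K -> Q l (y (k1 * k2)) = k1 * k2.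
  by move=> K1 K2; rewrite Qy // !mem_cat allpairs_f ?orbT.
have Qy1 : Q l (y 1) = 1 by rewrite Qy // !mem_cat mem_head !orbT.
pose P := (y 1, 1) :: [seq (y (a * b), y a * y b) | a <- K, b <- K].
have QP : {in P, forall p, Q l p.1 = Q l p.2}.
  move=> p; rewrite inE => /predU1P[-> /=|/allpairsP[[a b] [Ka Kb ->]] /=].
    by rewrite Qy1 q_one.
  by rewrite Qy_KK // Q_mul !Qy_K.
have [l' [ll' eq_l']] := equalize_at_level QP.
have [psi1 psiM] := psi_morph ll'.
exists l', (fun m => psi l l' (y m)); split.
- by move=> k1 k2 K1 K2 /(congr1 (fun x => Q l' x)); rewrite !Q_psi // !Qy_K.
- move=> k1 k2 K1 K2; rewrite -psiM; apply: (eq_l' (_, _)).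
  by rewrite inE allpairs_f ?orbT.
- by rewrite -psi1; apply: (eq_l' (_, _)); rewrite mem_head.
Qed.

End LimitLocalEmbedding.

Theorem proposition3p10 (I : Type) (le : I -> I -> Prop)
    (Mi : I -> monoidType) (psi : forall i j : I, Mi i -> Mi j)
    (M : monoidType) :
  inductive_system le psi ->
  (forall i, sofic (Mi i)) ->
  is_limit le psi M ->
  sofic M.
Proof.
move=> [le_dir [psi_morph [psi_id psi_comp]]] sofic_Mi [q [q_surj [q_eq [q_mul q_one]]]].
apply: sofic_of_local_embeddings => K.
have [l [s [s_inj sM s1]]] :=
  limit_local_embedding le_dir psi_morph psi_id psi_comp q_surj q_eq q_mul q_one K.
by exists (Mi l), s.
Qed.
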